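(* Assume CH. Let $\mathcal{I}$ be a $\sigma$-ideal on $\mathbb{R}$ satisfying the standing assumptions. Then there exists an $\mathcal{I}$-Luzin set $L\subseteq\mathbb{R}$ such that its $\mathbb{Q}$-linear span $\mathrm{span}_{\mathbb{Q}}(L)$ is also an $\mathcal{I}$-Luzin set.
   Context: Standing assumptions on $\mathcal{I}$: $\mathcal{I}$ is a $\sigma$-ideal of subsets of $\mathbb{R}$ such that $\mathbb{R}\notin\mathcal{I}$; $x+I\in\mathcal{I}$ and $xI\in\mathcal{I}$ for all $x\in\mathbb{R}$, $I\in\mathcal{I}$; every member of $\mathcal{I}$ is contained in a Borel member of $\mathcal{I}$; and for all Borel $A,B\notin\mathcal{I}$ the set $A-B$ has nonempty interior. A set $L\subseteq\mathbb{R}$ is $\mathcal{I}$-Luzin if $|L|=\mathfrak{c}$ and $L\cap I$ is countable for every $I\in\mathcal{I}$. *)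

From Stdlib Require Import Reals QArith Qreals.
Open Scope R_scope.

Definition subset (A B : R -> Prop) : Prop := forall x, A x -> B x.

Definition countable (A : R -> Prop) : Prop :=
  exists f : {x : R | A x} -> nat, forall u v, f u = f v -> u = v.

Definition has_size_continuum (A : R -> Prop) : Prop :=
  exists f : {x : R | A x} -> R,
    (forall u v, f u = f v -> u = v) /\ (forall y, exists u, f u = y).

Definition CH : Prop :=
  forall A : R -> Prop, countable A \/ has_size_continuum A.

Inductive Borel : (R -> Prop) -> Prop :=
| Borel_open : forall U, open_set U -> Borel U
| Borel_compl : forall A, Borel A -> Borel (fun x => ~ A x)
| Borel_cunion : forall F : nat -> R -> Prop,
    (forall n, Borel (F n)) -> Borel (fun x => exists n, F n x).

Definition translate (x : R) (A : R -> Prop) : R -> Prop :=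
  fun z => exists y, A y /\ z = x + y.
Definition scale (x : R) (A : R -> Prop) : R -> Prop :=
  fun z => exists y, A y /\ z = x * y.
Definition setdiff_alg (A B : R -> Prop) : R -> Prop :=
  fun z => exists a b, A a /\ B b /\ z = a - b.
Definition nonempty_interior (A : R -> Prop) : Prop :=
  exists x eps, 0 < eps /\ forall y, Rabs (y - x) < eps -> A y.

Definition sigma_ideal (I : (R -> Prop) -> Prop) : Prop :=
  I (fun _ => False) /\
  (forall A B, I B -> subset A B -> I A) /\
  (forall F : nat -> R -> Prop, (forall n, I (F n)) -> I (fun x => exists n, F n x)).

Definition standing_assumptions (I : (R -> Prop) -> Prop) : Prop :=
  sigma_ideal I /\
  ~ I (fun _ => True) /\
  (forall x A, I A -> I (translate x A) /\ I (scale x A)) /\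
  (forall A, I A -> exists B, Borel B /\ I B /\ subset A B) /\
  (forall A B, Borel A -> Borel B -> ~ I A -> ~ I B ->
     nonempty_interior (setdiff_alg A B)).

Definition I_Luzin (I : (R -> Prop) -> Prop) (L : R -> Prop) : Prop :=
  has_size_continuum L /\
  forall A, I A -> countable (fun x => L x /\ A x).

Inductive span_Q (L : R -> Prop) : R -> Prop :=
| span_Q_zero : span_Q L 0
| span_Q_base : forall x, L x -> span_Q L x
| span_Q_add : forall x y, span_Q L x -> span_Q L y -> span_Q L (x + y)
| span_Q_scal : forall (q : Q) x, span_Q L x -> span_Q L (Q2R q * x).

(* Enumerate the Borel members of I along a well-order (B_a) of type omega_1: there are only
   continuum many Borel sets, and CH makes the continuum aleph_1.  By transfinite recursion pick
   x_a outside the countable union of I-sets formed by the Q-span of the earlier points and the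
   sets (B_c - v) / q for c <= a, v in that span and rational q <> 0.  A vector of span{x_a}
   lying in B_r then involves only points x_b with b <= r: were its largest index m > r, it would
   read q x_m + v with q <> 0 and so lie outside B_r.  Hence span(L) meets each B_r, and so each
   member of I, in a countable set, while L = {x_a} is uncountable, so of size continuum by CH. *)

From Stdlib Require Import Reals QArith Qreals.
Open Scope R_scope.
From Stdlib Require Import ZArith Lia Lra Cantor Wf_nat Wellfounded.
From Stdlib Require Import Classical ClassicalEpsilon.
From Stdlib Require Import FunctionalExtensionality PropExtensionality ProofIrrelevance.
From mathcomp Require boolp wochoice Rstruct.

Definition enumerable {J : Type} (D : J -> Prop) : Prop :=
  exists e : nat -> option J, forall j, D j -> exists n, e n = Some j.

Lemma enumerable_sub {J : Type} (D D' : J -> Prop) :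
  (forall j, D j -> D' j) -> enumerable D' -> enumerable D.
Proof. intros H [e He]; exists e; intros j Dj; apply He, H, Dj. Qed.

Lemma enumerable_singleton {J : Type} (a : J) : enumerable (fun j => j = a).
Proof. exists (fun _ => Some a); intros j ->; exists 0%nat; reflexivity. Qed.

Lemma enumerable_nat : enumerable (fun _ : nat => True).
Proof. exists Some; intros n _; exists n; reflexivity. Qed.

Lemma enumerable_bigcup {J K : Type} (D : J -> Prop) (F : J -> K -> Prop) :
  enumerable D -> (forall j, D j -> enumerable (F j)) ->
  enumerable (fun k => exists j, D j /\ F j k).
Proof.
  intros [eD HD] HF.
  pose (enum_of j := epsilon (inhabits (fun _ : nat => @None K))
                       (fun e => forall k, F j k -> exists n, e n = Some k)).
  exists (fun n => let (i, m) := Cantor.of_nat n in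
                   match eD i with Some j => enum_of j m | None => None end).
  intros k (j & Dj & Fjk).
  destruct (HD j Dj) as [i Hi].
  destruct (epsilon_spec (inhabits (fun _ : nat => @None K)) _ (HF j Dj) k Fjk) as [m Hm].
  exists (Cantor.to_nat (i, m)). rewrite Cantor.cancel_of_to, Hi. exact Hm.
Qed.

Lemma enumerable_image {J K : Type} (f : J -> K) (D : J -> Prop) :
  enumerable D -> enumerable (fun k => exists j, D j /\ f j = k).
Proof.
  intros HD. apply (enumerable_bigcup D (fun j k => f j = k) HD).
  intros j _. apply (enumerable_sub _ _ (fun k H => eq_sym H)), enumerable_singleton.
Qed.

Lemma enumerable_image2 {J1 J2 K : Type} (f : J1 -> J2 -> K)
    (D1 : J1 -> Prop) (D2 : J2 -> Prop) :
  enumerable D1 -> enumerable D2 ->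
  enumerable (fun k => exists j1 j2, D1 j1 /\ D2 j2 /\ f j1 j2 = k).
Proof.
  intros H1 H2.
  apply enumerable_sub with (fun k => exists j1, D1 j1 /\ exists j2, D2 j2 /\ f j1 j2 = k).
  - intros k (j1 & j2 & ? & ? & ?); eauto.
  - apply (enumerable_bigcup D1 _ H1). intros j1 _. apply enumerable_image, H2.
Qed.

Lemma enumerable_union {J : Type} (D1 D2 : J -> Prop) :
  enumerable D1 -> enumerable D2 -> enumerable (fun j => D1 j \/ D2 j).
Proof.
  intros H1 H2.
  apply enumerable_sub with (fun j => exists b : bool, True /\ (if b then D1 else D2) j).
  - intros j [H|H]; [exists true | exists false]; auto.
  - apply enumerable_bigcup; [|intros [|] _; assumption].
    exists (fun n => Some (Nat.eqb n 0)). intros [|] _; [exists 0%nat | exists 1%nat]; reflexivity.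
Qed.

Lemma enumerable_preimage_injective {J K : Type} (f : J -> K) (D : K -> Prop) :
  (forall a b, f a = f b -> a = b) -> enumerable D -> enumerable (fun j => D (f j)).
Proof.
  intros Hf [e He].
  exists (fun n => match e n with
           | Some k => match excluded_middle_informative (exists j, f j = k) with
                       | left H => Some (proj1_sig (constructive_indefinite_description _ H))
                       | right _ => None end
           | None => None end).
  intros j Dj. destruct (He _ Dj) as [n Hn]. exists n. rewrite Hn.
  destruct excluded_middle_informative as [H|H]; [|exfalso; eauto].
  destruct (constructive_indefinite_description _ H) as [j' Hj']; simpl.
  f_equal; apply Hf, Hj'.
Qed.

Lemma proj1_sig_injective {J : Type} (P : J -> Prop) (u v : sig P) :
  proj1_sig u = proj1_sig v -> u = v.
Proof. apply eq_sig_hprop; intros; apply proof_irrelevance. Qed.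

Lemma Z_of_nat_diff (z : Z) : exists a b, (Z.of_nat a - Z.of_nat b)%Z = z.
Proof.
  destruct (Z_le_gt_dec 0 z).
  - exists (Z.to_nat z), 0%nat. rewrite Z2Nat.id; lia.
  - exists 0%nat, (Z.to_nat (- z)). rewrite Z2Nat.id; lia.
Qed.

Lemma enumerable_Q : enumerable (fun _ : Q => True).
Proof.
  assert (HZ : enumerable (fun _ : Z => True)).
  { apply enumerable_sub with
      (fun z => exists a b, True /\ True /\ (Z.of_nat a - Z.of_nat b)%Z = z).
    - intros z _. destruct (Z_of_nat_diff z) as (a & b & E). exists a, b; auto.
    - apply enumerable_image2; apply enumerable_nat. }
  assert (Hpos : enumerable (fun _ : positive => True)).
  { apply enumerable_sub with (fun p => exists n, True /\ Pos.of_nat n = p).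
    - intros p _. exists (Pos.to_nat p). split; [exact I | apply Pos2Nat.id].
    - apply enumerable_image, enumerable_nat. }
  apply enumerable_sub with (fun q => exists z p, True /\ True /\ Qmake z p = q).
  - intros [z p] _. exists z, p; auto.
  - apply enumerable_image2; assumption.
Qed.

Lemma countable_enumerable (A : R -> Prop) : countable A -> enumerable A.
Proof.
  intros [f Hf].
  exists (fun n => match excluded_middle_informative (exists u, f u = n) with
           | left H => Some (proj1_sig (proj1_sig (constructive_indefinite_description _ H)))
           | right _ => None end).
  intros z Az. exists (f (exist _ z Az)).
  destruct excluded_middle_informative as [H|H]; [|exfalso; eauto].
  destruct (constructive_indefinite_description _ H) as [u Hu]; simpl.
  apply Hf in Hu. subst u. reflexivity.
Qed.

Lemma enumerable_countable (A : R -> Prop) : enumerable A -> countable A.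
Proof.
  intros [e He].
  exists (fun u => proj1_sig (constructive_indefinite_description _ (He _ (proj2_sig u)))).
  intros [u Hu] [v Hv]; simpl.
  destruct (constructive_indefinite_description _ (He u Hu)) as [n1 H1].
  destruct (constructive_indefinite_description _ (He v Hv)) as [n2 H2]; simpl.
  intros <-. rewrite H1 in H2. injection H2 as ->. apply proj1_sig_injective; reflexivity.
Qed.

Lemma span_Q_mono (A B : R -> Prop) : subset A B -> subset (span_Q A) (span_Q B).
Proof.
  intros H z Hz; induction Hz;
    [apply span_Q_zero | apply span_Q_base, H | apply span_Q_add | apply span_Q_scal]; auto.
Qed.

Definition span_step (A : R -> Prop) : R -> Prop := fun z =>
  A z \/ (exists a b, A a /\ A b /\ a + b = z) \/ (exists (q : Q) a, A a /\ Q2R q * a = z).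

Fixpoint span_stage (L : R -> Prop) (k : nat) : R -> Prop :=
  match k with
  | O => fun z => z = 0 \/ L z
  | S k => span_step (span_stage L k)
  end.

Lemma span_stage_mono (L : R -> Prop) (k k' : nat) :
  (k <= k')%nat -> subset (span_stage L k) (span_stage L k').
Proof. intros H; induction H; intros z Hz; [exact Hz | left; auto]. Qed.

Lemma span_Q_stage (L : R -> Prop) (z : R) : span_Q L z -> exists k, span_stage L k z.
Proof.
  intros H; induction H as [| x Lx | x y _ [k1 H1] _ [k2 H2] | q x _ [k Hk]].
  - exists 0%nat; left; reflexivity.
  - exists 0%nat; right; exact Lx.
  - exists (S (Nat.max k1 k2)). right; left. exists x, y.
    repeat split; [apply (span_stage_mono L k1) | apply (span_stage_mono L k2)]; auto; lia.
  - exists (S k). right; right. exists q, x; auto.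
Qed.

Lemma enumerable_span_step (A : R -> Prop) : enumerable A -> enumerable (span_step A).
Proof.
  intros HA. apply enumerable_union; [exact HA | apply enumerable_union].
  - apply enumerable_image2; exact HA.
  - apply enumerable_sub with
      (fun z => exists (q : Q) a, True /\ A a /\ Q2R q * a = z).
    + intros z (q & a & Ha & E); exists q, a; auto.
    + apply enumerable_image2; [apply enumerable_Q | exact HA].
Qed.

Lemma enumerable_span_Q (L : R -> Prop) : enumerable L -> enumerable (span_Q L).
Proof.
  intros HL.
  apply enumerable_sub with (fun z => exists k, True /\ span_stage L k z).
  - intros z Hz. destruct (span_Q_stage L z Hz) as [k Hk]; eauto.
  - apply (enumerable_bigcup _ _ enumerable_nat). intros k _. induction k.
    + apply enumerable_union; [apply enumerable_singleton | exact HL].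
    + apply enumerable_span_step, IHk.
Qed.

Section LuzinConstruction.

Variable I : (R -> Prop) -> Prop.
Hypothesis I_sub : forall A B, I B -> subset A B -> I A.
Hypothesis I_cunion : forall F : nat -> R -> Prop,
  (forall n, I (F n)) -> I (fun y => exists n, F n y).
Hypothesis I_proper : ~ I (fun _ => True).
Hypothesis I_translate : forall x A, I A -> I (translate x A).
Hypothesis I_scale : forall x A, I A -> I (scale x A).
Hypothesis I_singleton : forall y, I (fun z => z = y).

Lemma I_union (A B : R -> Prop) : I A -> I B -> I (fun y => A y \/ B y).
Proof.
  intros HA HB.
  apply I_sub with (fun y => exists n, (match n with O => A | S _ => B end) y).
  - apply I_cunion; intros [|]; assumption.
  - intros y [H|H]; [exists 0%nat | exists 1%nat]; exact H.
Qed.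

Lemma I_bigcup {J : Type} (D : J -> Prop) (F : J -> R -> Prop) :
  enumerable D -> (forall j, D j -> I (F j)) -> I (fun y => exists j, D j /\ F j y).
Proof.
  intros [e He] HF.
  apply I_sub with
    (fun y => exists n, match e n with Some j => D j /\ F j y | None => False end).
  - apply I_cunion. intros n. destruct (e n) as [j|].
    + destruct (classic (D j)) as [Dj|NDj].
      * apply I_sub with (F j); [apply HF, Dj | intros y [_ Hy]; exact Hy].
      * apply I_sub with (fun z => z = 0); [apply I_singleton | intros y [Dj _]; contradiction].
    + apply I_sub with (fun z => z = 0); [apply I_singleton | intros y []].
  - intros y (j & Dj & Fj). destruct (He j Dj) as [n Hn]. exists n. rewrite Hn. auto.
Qed.

Lemma I_enumerable (A : R -> Prop) : enumerable A -> I A.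
Proof.
  intros HA. apply I_sub with (fun y => exists a, A a /\ y = a); [|intros y Ay; eauto].
  apply (I_bigcup A (fun a y => y = a) HA). intros a _; apply I_singleton.
Qed.

Definition avoid (X : R -> Prop) : R := epsilon (inhabits 0) (fun y => ~ X y).

Lemma avoid_spec (X : R -> Prop) : I X -> ~ X (avoid X).
Proof.
  intros HX. unfold avoid. apply epsilon_spec. apply NNPP; intros H.
  apply I_proper, (I_sub _ X HX). intros y _. apply NNPP; intros Hy; eauto.
Qed.

Variable T : Type.
Variable lt : T -> T -> Prop.
Hypothesis lt_wf : well_founded lt.
Hypothesis lt_trans : forall a b c, lt a b -> lt b c -> lt a c.
Hypothesis lt_trichotomy : forall a b, lt a b \/ a = b \/ lt b a.
Hypothesis lt_segment_enumerable : forall a, enumerable (fun b => lt b a).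
Hypothesis T_uncountable : ~ enumerable (fun _ : T => True).
Variable Bs : T -> R -> Prop.
Hypothesis Bs_I : forall t, I (Bs t).
Hypothesis Bs_cofinal : forall A, I A -> exists t, subset A (Bs t).

Definition lte (b a : T) : Prop := lt b a \/ b = a.

Lemma lte_segment_enumerable (a : T) : enumerable (fun b => lte b a).
Proof. apply enumerable_union; [apply lt_segment_enumerable | apply enumerable_singleton]. Qed.

Definition forbidden (P : R -> Prop) (a : T) : R -> Prop := fun y =>
  span_Q P y \/
  exists (q : Q) v c, Q2R q <> 0 /\ span_Q P v /\ lte c a /\ Bs c (Q2R q * y + v).

Lemma forbidden_I (P : R -> Prop) (a : T) : enumerable P -> I (forbidden P a).
Proof.
  intros HP. apply I_union; [apply I_enumerable, enumerable_span_Q, HP |].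
  apply I_sub with (fun y => exists q : Q, True /\ exists v, span_Q P v /\
    exists c, lte c a /\ Q2R q <> 0 /\ Bs c (Q2R q * y + v)).
  - apply (I_bigcup _ _ enumerable_Q); intros q _.
    apply (I_bigcup _ _ (enumerable_span_Q P HP)); intros v _.
    apply (I_bigcup _ _ (lte_segment_enumerable a)); intros c _.
    destruct (Req_dec (Q2R q) 0) as [E|E].
    + apply I_sub with (Bs c); [apply Bs_I | intros y [Hq _]; contradiction].
    + apply I_sub with (scale (/ Q2R q) (translate (- v) (Bs c)));
        [apply I_scale, I_translate, Bs_I |].
      intros y [_ H]. exists (Q2R q * y). split.
      * exists (Q2R q * y + v). split; [exact H | ring].
      * field; exact E.
  - intros y (q & v & c & Hq & Hv & Hc & HB). exists q; split; [exact Logic.I |].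
    exists v; split; [exact Hv |]. exists c; auto.
Qed.

Definition luzin_point : T -> R :=
  Fix lt_wf (fun _ => R)
    (fun a rec => avoid (forbidden (fun z => exists b (h : lt b a), rec b h = z) a)).

Definition luzin_image (D : T -> Prop) : R -> Prop :=
  fun z => exists b, D b /\ luzin_point b = z.

Lemma luzin_point_unfold (a : T) :
  luzin_point a = avoid (forbidden (luzin_image (fun b => lt b a)) a).
Proof.
  unfold luzin_point at 1. rewrite Fix_eq.
  - do 3 f_equal. apply functional_extensionality; intros z.
    apply propositional_extensionality; split.
    + intros (b & h & E); exists b; split; auto.
    + intros (b & h & E); exists b, h; auto.
  - intros a' f g H. do 3 f_equal. apply functional_extensionality; intros z.
    apply propositional_extensionality; split;
      intros (b & h & E); exists b, h; [rewrite <- H | rewrite H]; exact E.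
Qed.

Lemma luzin_image_enumerable (D : T -> Prop) : enumerable D -> enumerable (luzin_image D).
Proof. apply enumerable_image. Qed.

Lemma luzin_point_not_forbidden (a : T) :
  ~ forbidden (luzin_image (fun b => lt b a)) a (luzin_point a).
Proof.
  rewrite (luzin_point_unfold a). apply avoid_spec, forbidden_I, luzin_image_enumerable,
    lt_segment_enumerable.
Qed.

Lemma luzin_point_injective (a b : T) : luzin_point a = luzin_point b -> a = b.
Proof.
  assert (K : forall a b, lt b a -> luzin_point a <> luzin_point b).
  { intros a' b' H E. apply (luzin_point_not_forbidden a'). left.
    apply span_Q_base. exists b'; auto. }
  intros E. destruct (lt_trichotomy a b) as [H|[H|H]]; auto.
  - exfalso; apply (K b a H); auto.
  - exfalso; apply (K a b H); auto.
Qed.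

Lemma luzin_image_lte_mono (m1 m2 : T) :
  lt m1 m2 -> subset (luzin_image (fun b => lte b m1)) (luzin_image (fun b => lte b m2)).
Proof.
  intros H z (b & Hb & E); exists b; split; auto; left; destruct Hb as [Hb| ->]; eauto.
Qed.

Lemma span_luzin_image_support (D : T -> Prop) (z : R) :
  span_Q (luzin_image D) z ->
  z = 0 \/ exists m, D m /\ span_Q (luzin_image (fun b => lte b m)) z.
Proof.
  intros H; induction H as [| y Hy | y1 y2 _ IH1 _ IH2 | q y _ IH].
  - left; reflexivity.
  - destruct Hy as (b & Hb & <-). right. exists b; split; auto.
    apply span_Q_base. exists b; split; [right|]; reflexivity.
  - destruct IH1 as [-> | (m1 & D1 & S1)]; destruct IH2 as [-> | (m2 & D2 & S2)].
    + left; ring.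
    + right; exists m2; rewrite Rplus_0_l; auto.
    + right; exists m1; rewrite Rplus_0_r; auto.
    + right. destruct (lt_trichotomy m1 m2) as [L|[<-|L]].
      * exists m2; split; auto. apply span_Q_add; auto.
        apply (span_Q_mono _ _ (luzin_image_lte_mono _ _ L)); auto.
      * exists m1; split; auto. apply span_Q_add; auto.
      * exists m1; split; auto. apply span_Q_add; auto.
        apply (span_Q_mono _ _ (luzin_image_lte_mono _ _ L)); auto.
  - destruct IH as [-> | (m & Dm & Sm)].
    + left; ring.
    + right; exists m; split; auto. apply span_Q_scal; auto.
Qed.

Lemma span_luzin_image_lte_decompose (m : T) (z : R) :
  span_Q (luzin_image (fun b => lte b m)) z ->
  exists (q : Q) v, span_Q (luzin_image (fun b => lt b m)) v /\ z = Q2R q * luzin_point m + v.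
Proof.
  assert (Q0 : Q2R 0 = 0) by (unfold Q2R; simpl; lra).
  assert (Q1 : Q2R 1 = 1) by (unfold Q2R; simpl; lra).
  intros H; induction H as [| y Hy | y1 y2 _ IH1 _ IH2 | q y _ IH].
  - exists 0%Q, 0. split; [apply span_Q_zero | rewrite Q0; ring].
  - destruct Hy as (b & [Hb| ->] & <-).
    + exists 0%Q, (luzin_point b).
      split; [apply span_Q_base; exists b; auto | rewrite Q0; ring].
    + exists 1%Q, 0. split; [apply span_Q_zero | rewrite Q1; ring].
  - destruct IH1 as (q1 & v1 & H1 & ->), IH2 as (q2 & v2 & H2 & ->).
    exists (q1 + q2)%Q, (v1 + v2). split; [apply span_Q_add; auto | rewrite Q2R_plus; ring].
  - destruct IH as (q1 & v1 & H1 & ->).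
    exists (q * q1)%Q, (Q2R q * v1). split; [apply span_Q_scal; auto | rewrite Q2R_mult; ring].
Qed.

Lemma span_luzin_image_Bs (m r : T) (z : R) :
  span_Q (luzin_image (fun b => lte b m)) z -> Bs r z ->
  span_Q (luzin_image (fun b => lte b r)) z.
Proof.
  revert z. induction (lt_wf m) as [m _ IH]; intros z Hz Hr.
  destruct (lt_trichotomy m r) as [L|[<-|L]].
  - exact (span_Q_mono _ _ (luzin_image_lte_mono _ _ L) z Hz).
  - exact Hz.
  - destruct (span_luzin_image_lte_decompose m z Hz) as (q & v & Hv & ->).
    destruct (Req_dec (Q2R q) 0) as [E|E].
    + rewrite E, Rmult_0_l, Rplus_0_l in *.
      destruct (span_luzin_image_support _ v Hv) as [-> | (m' & Hm' & Sm')].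
      * apply span_Q_zero.
      * exact (IH m' Hm' v Sm' Hr).
    + (* z = q x_m + v in B_r with r < m: exactly what the choice of x_m excluded *)
      exfalso. apply (luzin_point_not_forbidden m). right. exists q, v, r. repeat split; auto.
      left; exact L.
Qed.

Theorem luzin_construction : exists L : R -> Prop,
  ~ enumerable L /\ forall A, I A -> enumerable (fun z => span_Q L z /\ A z).
Proof.
  exists (luzin_image (fun _ => True)). split.
  - intros HL. apply T_uncountable.
    apply (enumerable_preimage_injective luzin_point _ luzin_point_injective) in HL.
    apply (enumerable_sub _ _ (fun t _ => ex_intro _ t (conj Logic.I eq_refl)) HL).
  - intros A HA. destruct (Bs_cofinal A HA) as [r Hr].
    apply enumerable_sub with (span_Q (luzin_image (fun b => lte b r))).
    + intros z [Hz Az]. destruct (span_luzin_image_support _ z Hz) as [-> | (m & _ & Sm)].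
      * apply span_Q_zero.
      * exact (span_luzin_image_Bs m r z Sm (Hr z Az)).
    + apply enumerable_span_Q, luzin_image_enumerable, lte_segment_enumerable.
Qed.

End LuzinConstruction.

Fixpoint tern_partial (b : nat -> bool) (n : nat) : R :=
  match n with
  | O => 0
  | S n => tern_partial b n + (if b n then (/ 3) ^ n else 0)
  end.

Lemma pow_third_pos (n : nat) : 0 < (/ 3) ^ n.
Proof. apply pow_lt; lra. Qed.

Lemma tern_partial_step (b : nat -> bool) (n : nat) :
  tern_partial b n <= tern_partial b (S n) <= tern_partial b n + (/ 3) ^ n.
Proof. simpl. pose proof (pow_third_pos n). destruct (b n); lra. Qed.

Lemma tern_partial_mono (b : nat -> bool) (n t : nat) :
  tern_partial b n <= tern_partial b (n + t).
Proof.
  induction t; [rewrite Nat.add_0_r; lra |].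
  rewrite Nat.add_succ_r. pose proof (tern_partial_step b (n + t)). lra.
Qed.

Lemma tern_partial_tail (b : nat -> bool) (m t : nat) :
  tern_partial b (m + t) <= tern_partial b m + 3 / 2 * (/ 3) ^ m * (1 - (/ 3) ^ t).
Proof.
  induction t.
  - rewrite Nat.add_0_r; simpl; lra.
  - rewrite Nat.add_succ_r. pose proof (tern_partial_step b (m + t)) as H.
    rewrite pow_add in H. simpl pow.
    pose proof (pow_third_pos m); pose proof (pow_third_pos t). nra.
Qed.

Lemma tern_partial_agree (b c : nat -> bool) (k : nat) :
  (forall i, (i < k)%nat -> b i = c i) -> tern_partial b k = tern_partial c k.
Proof.
  induction k; intros H; simpl; auto.
  rewrite IHk by (intros; apply H; lia). rewrite (H k) by lia. reflexivity.
Qed.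

Definition tern (b : nat -> bool) : R.
Proof.
  refine (proj1_sig (completeness (fun y => exists n, y = tern_partial b n) _ _)).
  - exists (3 / 2). intros y [n ->].
    pose proof (tern_partial_tail b 0 n). pose proof (pow_third_pos n). simpl in *. lra.
  - exists 0, O; reflexivity.
Defined.

Lemma tern_lub (b : nat -> bool) : is_lub (fun y => exists n, y = tern_partial b n) (tern b).
Proof. unfold tern; destruct completeness; assumption. Qed.

(* Digits are 0 or 1 in base 3, so the tail after a 0 digit stays below half its weight. *)
Lemma tern_separate (b c : nat -> bool) (k : nat) :
  b k = true -> c k = false -> (forall i, (i < k)%nat -> b i = c i) -> tern c < tern b.
Proof.
  intros Hb Hc Hi.
  destruct (tern_lub b) as [Ub _]. destruct (tern_lub c) as [_ Lc].
  pose proof (pow_third_pos k).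
  assert (H1 : tern_partial b (S k) <= tern b) by (apply Ub; exists (S k); reflexivity).
  simpl in H1. rewrite Hb, (tern_partial_agree b c k Hi) in H1.
  assert (H2 : tern c <= tern_partial c k + (/ 3) ^ k / 2).
  { apply Lc. intros y [n ->]. destruct (le_lt_dec n k) as [L|L].
    - pose proof (tern_partial_mono c n (k - n)) as H0.
      replace (n + (k - n))%nat with k in H0 by lia. lra.
    - replace n with (S k + (n - S k))%nat by lia.
      pose proof (tern_partial_tail c (S k) (n - S k)) as H0.
      replace (tern_partial c (S k)) with (tern_partial c k) in H0
        by (simpl; rewrite Hc; ring).
      replace ((/ 3) ^ S k) with (/ 3 * (/ 3) ^ k) in H0 by reflexivity.
      pose proof (pow_third_pos (n - S k)). nra. }
  lra.
Qed.

Lemma tern_injective (b c : nat -> bool) : tern b = tern c -> b = c.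
Proof.
  intros E. apply functional_extensionality; intros n.
  induction n as [n IH] using lt_wf_ind.
  destruct (b n) eqn:Eb, (c n) eqn:Ec; auto.
  - pose proof (tern_separate b c n Eb Ec IH); lra.
  - assert (IH' : forall i, (i < n)%nat -> c i = b i) by (intros; symmetry; auto).
    pose proof (tern_separate c b n Ec Eb IH'); lra.
Qed.

Definition graph_code (f : nat -> nat) : nat -> bool :=
  fun n => let (a, b) := Cantor.of_nat n in Nat.eqb (f a) b.

Lemma graph_code_injective (f g : nat -> nat) : graph_code f = graph_code g -> f = g.
Proof.
  intros E. apply functional_extensionality; intros a.
  pose proof (f_equal (fun h => h (Cantor.to_nat (a, f a))) E) as H.
  unfold graph_code in H. rewrite Cantor.cancel_of_to, Nat.eqb_refl in H.
  symmetry in H. apply Nat.eqb_eq in H. symmetry; exact H.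
Qed.

Lemma R_onto_baire : exists d : R -> (nat -> nat), forall f, exists r, d r = f.
Proof.
  pose (g f := tern (graph_code f)).
  exists (fun r => epsilon (inhabits (fun _ => 0%nat)) (fun f => g f = r)).
  intros f. exists (g f).
  apply graph_code_injective, tern_injective.
  apply (epsilon_spec (inhabits (fun _ => 0%nat)) (fun f' => g f' = g f)).
  exists f; reflexivity.
Qed.

Lemma R_not_enumerable : ~ enumerable (fun _ : R => True).
Proof.
  intros [e He]. destruct R_onto_baire as [d Hd].
  destruct (Hd (fun n => S (match e n with Some r => d r n | None => 0 end)%nat)) as [r Hr].
  destruct (He r Logic.I) as [n Hn].
  pose proof (f_equal (fun f => f n) Hr) as E. simpl in E. rewrite Hn in E. lia.
Qed.

(* The ball with center (a - b) / (N + 1) and radius 1 / (N + 1), for k = <<a, b>, N>. *)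
Definition rat_ball (k : nat) : R -> Prop :=
  let (p, N) := Cantor.of_nat k in let (a, b) := Cantor.of_nat p in
  fun y => Rabs (y - IZR (Z.of_nat a - Z.of_nat b) / INR (S N)) < / INR (S N).

Lemma open_set_rat_ball (U : R -> Prop) (y : R) :
  open_set U -> U y -> exists k, rat_ball k y /\ subset (rat_ball k) U.
Proof.
  intros HU Uy. destruct (HU y Uy) as [[delta Hd] Hinc]. simpl in Hinc.
  destruct (archimed_cor1 (delta / 2)) as (N & HN & HN0); [lra |].
  pose (m := (up (y * INR N) - 1)%Z).
  assert (Hm : IZR m <= y * INR N < IZR m + 1).
  { destruct (archimed (y * INR N)). unfold m. rewrite minus_IZR. simpl. lra. }
  destruct (Z_of_nat_diff m) as (a & b & Hab).
  exists (Cantor.to_nat (Cantor.to_nat (a, b), Init.Nat.pred N)).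
  assert (HNr : 0 < INR N) by (apply lt_0_INR; lia).
  assert (Hball : forall z, rat_ball (Cantor.to_nat (Cantor.to_nat (a, b), Init.Nat.pred N)) z
                            <-> Rabs (z - IZR m / INR N) < / INR N).
  { intros z. unfold rat_ball. rewrite !Cantor.cancel_of_to, Hab.
    replace (S (Init.Nat.pred N)) with N by lia. reflexivity. }
  assert (Hy : Rabs (y - IZR m / INR N) < / INR N).
  { replace (y - IZR m / INR N) with ((y * INR N - IZR m) / INR N) by (field; lra).
    rewrite Rabs_right.
    - unfold Rdiv. rewrite <- (Rmult_1_l (/ INR N)) at 2.
      apply Rmult_lt_compat_r; [apply Rinv_0_lt_compat |]; lra.
    - apply Rle_ge, Rmult_le_pos; [| apply Rlt_le, Rinv_0_lt_compat]; lra. }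
  split; [apply Hball, Hy |].
  intros z Hz%Hball. apply Hinc. unfold disc; simpl.
  replace (z - y) with ((z - IZR m / INR N) + (IZR m / INR N - y)) by ring.
  eapply Rle_lt_trans; [apply Rabs_triang |].
  rewrite Rabs_minus_sym in Hy. lra.
Qed.

(* The tag [f 0] selects: 0 = the union of the balls [k] with [f (S k) <> 0],
   1 = a complement, 2 = a countable union (the n-th code is read through Cantor pairing). *)
Inductive borel_code : (nat -> nat) -> (R -> Prop) -> Prop :=
| code_open f : f 0%nat = 0%nat ->
    borel_code f (fun y => exists k, f (S k) <> 0%nat /\ rat_ball k y)
| code_compl f A : f 0%nat = 1%nat -> borel_code (fun n => f (S n)) A ->
    borel_code f (fun y => ~ A y)
| code_cunion f (F : nat -> R -> Prop) : f 0%nat = 2%nat ->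
    (forall n, borel_code (fun m => f (S (Cantor.to_nat (n, m)))) (F n)) ->
    borel_code f (fun y => exists n, F n y).

Lemma borel_code_functional (f : nat -> nat) (A B : R -> Prop) :
  borel_code f A -> borel_code f B -> A = B.
Proof.
  intros H; revert B; induction H as [f Hf | f A Hf _ IH | f F Hf _ IH];
    intros B HB; inversion HB; subst; try congruence.
  - rewrite (IH _ H0); reflexivity.
  - replace F0 with F; [reflexivity |].
    apply functional_extensionality; intros n. apply IH; auto.
Qed.

Lemma Borel_has_code (B : R -> Prop) : Borel B -> exists f, borel_code f B.
Proof.
  intros H; induction H as [U HU | A _ [f Hf] | F _ IH].
  - pose (f n := match n with
                 | O => O
                 | S k => if excluded_middle_informative (subset (rat_ball k) U) then 1 else O
                 end%nat).
    exists f.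
    replace U with (fun y => exists k, f (S k) <> 0%nat /\ rat_ball k y);
      [apply code_open; reflexivity |].
    apply functional_extensionality; intros y; apply propositional_extensionality; split.
    + intros (k & Hk & Hb). simpl in Hk.
      destruct excluded_middle_informative as [Hs|]; [exact (Hs y Hb) | congruence].
    + intros Uy. destruct (open_set_rat_ball U y HU Uy) as (k & Hk & Hs).
      exists k; split; auto. simpl.
      destruct excluded_middle_informative; [discriminate | contradiction].
  - exists (fun n => match n with O => 1%nat | S n => f n end). apply code_compl; auto.
  - pose (G n := proj1_sig (constructive_indefinite_description _ (IH n))).
    assert (HG : forall n, borel_code (G n) (F n))
      by (intros n; unfold G; destruct constructive_indefinite_description; auto).
    exists (fun n => match n with
             | O => 2%nat
             | S n => let (i, j) := Cantor.of_nat n in G i j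
             end).
    apply code_cunion; [reflexivity |]. intros n.
    replace (fun m => _) with (G n); [apply HG |].
    apply functional_extensionality; intros m. rewrite Cantor.cancel_of_to. reflexivity.
Qed.

Lemma Borel_sets_parametrized :
  exists beta : R -> (R -> Prop), forall B, Borel B -> exists r, beta r = B.
Proof.
  destruct R_onto_baire as [d Hd].
  exists (fun r y => exists A, borel_code (d r) A /\ A y).
  intros B HB. destruct (Borel_has_code B HB) as [f Hf]. destruct (Hd f) as [r Hr].
  exists r. rewrite Hr.
  apply functional_extensionality; intros y; apply propositional_extensionality; split.
  - intros (A & HA & Ay). rewrite (borel_code_functional f B A Hf HA). exact Ay.
  - intros By. exists B; auto.
Qed.

Definition strict_well_order {T : Type} (lt : T -> T -> Prop) : Prop :=
  well_founded lt /\ (forall a b c, lt a b -> lt b c -> lt a c) /\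
  (forall a b, lt a b \/ a = b \/ lt b a).

Lemma strict_well_order_of_least {T : Type} (W : T -> T -> Prop) :
  (forall P : T -> Prop, (exists a, P a) -> exists! z, P z /\ forall y, P y -> W z y) ->
  strict_well_order (fun a b => W a b /\ a <> b).
Proof.
  intros Hmin.
  assert (Hleast : forall P : T -> Prop,
            (exists a, P a) -> exists z, P z /\ forall y, P y -> W z y).
  { intros P HP. destruct (Hmin P HP) as (z & Hz & _). eauto. }
  assert (Wtotal : forall a b, W a b \/ W b a).
  { intros a b. destruct (Hleast (fun z => z = a \/ z = b)) as (z & [-> | ->] & Hz); eauto. }
  assert (Wrefl : forall a, W a a) by (intros a; destruct (Wtotal a a); auto).
  assert (Wanti : forall a b, W a b -> W b a -> a = b).
  { intros a b Hab Hba. destruct (Hmin (fun z => z = a \/ z = b)) as (z & _ & U); [eauto |].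
    rewrite <- (U a), <- (U b); [reflexivity | ..];
      split; auto; intros y [-> | ->]; auto. }
  assert (Wtrans : forall a b c, W a b -> W b c -> W a c).
  { intros a b c Hab Hbc.
    destruct (Hleast (fun z => z = a \/ z = b \/ z = c)) as (z & Hz & Hm); [eauto |].
    destruct Hz as [-> | [-> | ->]].
    - apply Hm; auto.
    - rewrite (Wanti a b Hab (Hm a (or_introl eq_refl))); exact Hbc.
    - rewrite <- (Wanti b c Hbc (Hm b (or_intror (or_introl eq_refl)))) in *.
      exact Hab. }
  split; [| split].
  - intros a. apply NNPP; intros Na.
    destruct (Hleast (fun z => ~ Acc (fun a b => W a b /\ a <> b) z)) as (m & Hm & Hm_least);
      [eauto |].
    apply Hm. constructor. intros y [Hy1 Hy2]. apply NNPP; intros Ny.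
    apply Hy2, Wanti; auto.
  - intros a b c [H1 H2] [H3 H4]. split; [eauto |].
    intros ->. apply H2, Wanti; auto.
  - intros a b. destruct (classic (a = b)) as [E|E]; auto.
    destruct (Wtotal a b); [left | right; right]; split; auto.
Qed.

Module WellOrderR.
Import ssreflect ssrbool eqtype boolp wochoice Rstruct.

Lemma exists_unique_least_R : exists W : R -> R -> Prop,
  forall P : R -> Prop, (exists a, P a) -> exists! z, P z /\ forall y, P y -> W z y.
Proof.
have [W HW] := well_ordering_principle R.
exists (fun a b => W a b) => P [a Pa].
have ne : nonempty (fun y => `[< P y >]) by exists a; apply/asboolP.
have [z [[/asboolP Pz zl] U]] := HW _ ne.
exists z; split.
  by split=> // y Py; apply: zl; apply/asboolP.
move=> z' [Pz' z'l]; apply: U; split; first by apply/asboolP.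
by move=> y /asboolP Py; exact: z'l.
Qed.

End WellOrderR.

Lemma strict_well_order_sig {T : Type} (lt : T -> T -> Prop) (P : T -> Prop) :
  strict_well_order lt ->
  strict_well_order (fun u v : sig P => lt (proj1_sig u) (proj1_sig v)).
Proof.
  intros (Hwf & Htr & Htri). split; [| split].
  - exact (wf_inverse_image _ _ lt (@proj1_sig _ P) Hwf).
  - intros a b c; apply Htr.
  - intros u v. destruct (Htri (proj1_sig u) (proj1_sig v)) as [H|[H|H]]; auto.
    right; left; apply proj1_sig_injective, H.
Qed.

Lemma well_founded_minimal {T : Type} (lt : T -> T -> Prop) (P : T -> Prop) :
  well_founded lt -> (exists a, P a) -> exists m, P m /\ forall b, lt b m -> ~ P b.
Proof.
  intros Hwf [a Pa]. revert Pa. induction (Hwf a) as [a _ IH]; intros Pa.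
  destruct (classic (exists b, lt b a /\ P b)) as [(b & Hb & Pb) | N].
  - exact (IH b Hb Pb).
  - exists a; split; auto. intros b Hb Pb; apply N; eauto.
Qed.

(* Either all initial segments of a well-order of R are countable, or the first uncountable one
   is, by CH, an omega_1 of size continuum. *)
Lemma CH_omega1_order : CH ->
  exists (T : Type) (lt : T -> T -> Prop), strict_well_order lt /\
    (forall a, enumerable (fun b => lt b a)) /\ exists s : T -> R, forall r, exists t, s t = r.
Proof.
  intros HCH.
  destruct WellOrderR.exists_unique_least_R as [W HW].
  pose proof (strict_well_order_of_least W HW) as Hwo.
  set (lt := fun a b => W a b /\ a <> b) in Hwo.
  destruct (classic (forall a, enumerable (fun b => lt b a))) as [Hall | Hnot].
  - exists R, lt. split; [exact Hwo | split; [exact Hall |]].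
    exists (fun r => r); eauto.
  - apply not_all_ex_not in Hnot.
    destruct (well_founded_minimal lt _ (proj1 Hwo) Hnot) as (a0 & Ha0 & Hmin).
    exists {z | lt z a0}, (fun u v => lt (proj1_sig u) (proj1_sig v)).
    split; [apply strict_well_order_sig, Hwo | split].
    + intros [z Hz].
      apply (enumerable_preimage_injective (@proj1_sig R _) (fun y => lt y z)).
      * apply proj1_sig_injective.
      * apply NNPP; intros N; exact (Hmin z Hz N).
    + destruct (HCH (fun z => lt z a0)) as [C | (h & _ & Hh)].
      * exfalso; apply Ha0, countable_enumerable, C.
      * exists h; exact Hh.
Qed.

(* If the singleton {0} were not in I, then {0} - {0} = {0} would have nonempty interior. *)
Lemma standing_singleton (I : (R -> Prop) -> Prop) :
  standing_assumptions I -> forall y, I (fun z => z = y).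
Proof.
  intros ((_ & Isub & _) & _ & Iinv & _ & Iinterior) y.
  assert (B0 : Borel (fun z => z = 0)).
  { replace (fun z : R => z = 0) with (fun z => ~ (fun w => w <> 0) z).
    - apply Borel_compl, Borel_open. intros z Hz.
      exists (mkposreal _ (Rabs_pos_lt z Hz)). intros w Hw; unfold disc in Hw; simpl in Hw.
      intros ->. rewrite Rminus_0_l, Rabs_Ropp in Hw. lra.
    - apply functional_extensionality; intros z; apply propositional_extensionality.
      split; [intros Hz; apply NNPP, Hz | intros Hz Hn; contradiction]. }
  assert (I0 : I (fun z => z = 0)).
  { apply NNPP; intros N. destruct (Iinterior _ _ B0 B0 N N) as (c & eps & He & Hb).
    destruct (Hb c) as (a & b & -> & -> & E1); [rewrite Rminus_diag, Rabs_R0; exact He |].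
    destruct (Hb (c + eps / 2)) as (a & b & -> & -> & E2).
    - replace (c + eps / 2 - c) with (eps / 2) by ring. rewrite Rabs_right; lra.
    - lra. }
  apply Isub with (translate y (fun z => z = 0)); [apply Iinv, I0 |].
  intros z ->. exists 0; split; [reflexivity | ring].
Qed.

Lemma cofinal_ideal_family (I : (R -> Prop) -> Prop) (T : Type) (s : T -> R) :
  standing_assumptions I -> (forall r, exists t, s t = r) ->
  exists Bs : T -> R -> Prop,
    (forall t, I (Bs t)) /\ (forall A, I A -> exists t, subset A (Bs t)).
Proof.
  intros ((I0 & Isub & _) & _ & _ & Iborel & _) Hs.
  destruct Borel_sets_parametrized as [beta Hbeta].
  exists (fun t y => I (beta (s t)) /\ beta (s t) y). split.
  - intros t. destruct (classic (I (beta (s t)))) as [H|H].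
    + apply Isub with (beta (s t)); [exact H | intros y [_ Hy]; exact Hy].
    + apply Isub with (fun _ => False); [exact I0 | intros y [Hy _]; contradiction].
  - intros A HA. destruct (Iborel A HA) as (B & HB & IB & AB).
    destruct (Hbeta B HB) as [r Hr]. destruct (Hs r) as [t Ht].
    exists t. rewrite Ht, Hr. intros y Ay; auto.
Qed.

Lemma CH_size_continuum (A : R -> Prop) : CH -> ~ enumerable A -> has_size_continuum A.
Proof.
  intros HCH HA. destruct (HCH A) as [C|C]; [exfalso; apply HA, countable_enumerable, C | exact C].
Qed.

Theorem mainTheorem16 :
  CH ->
  forall I : (R -> Prop) -> Prop,
    standing_assumptions I ->
    exists L : R -> Prop, I_Luzin I L /\ I_Luzin I (span_Q L).
Proof.
  intros HCH I HI.
  destruct (CH_omega1_order HCH) as (T & lt & (Hwf & Htr & Htri) & Hseg & s & Hs).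
  destruct (cofinal_ideal_family I T s HI Hs) as (Bs & HBs & Hcof).
  pose proof (standing_singleton I HI) as Hsing.
  destruct HI as ((_ & Hsub & Hun) & Hproper & Hinv & _).
  assert (HT : ~ enumerable (fun _ : T => True)).
  { intros HT. apply R_not_enumerable.
    apply enumerable_sub with (fun r => exists t, True /\ s t = r);
      [| apply enumerable_image, HT].
    intros r _. destruct (Hs r) as [t Ht]; eauto. }
  destruct (luzin_construction I Hsub Hun Hproper (fun x A H => proj1 (Hinv x A H))
              (fun x A H => proj2 (Hinv x A H)) Hsing T lt Hwf Htr Htri Hseg HT Bs HBs Hcof)
    as (L & HL & Hspan).
  exists L. split; split.
  - apply CH_size_continuum; assumption.
  - intros A HA. apply enumerable_countable.
    apply (enumerable_sub _ _ (fun z H => conj (span_Q_base L z (proj1 H)) (proj2 H)) (Hspan A HA)).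
  - apply CH_size_continuum; [exact HCH |].
    intros HS. apply HL, (enumerable_sub _ _ (span_Q_base L) HS).
  - intros A HA. apply enumerable_countable, Hspan, HA.
Qed.
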